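(* A norm $\|\cdot\|$ on $\mathbb{M}_n$ is an $M$-norm if and only if its dual norm $\|\cdot\|_*$ is an $L$-norm; and $\|\cdot\|$ is an $L$-norm if and only if $\|\cdot\|_*$ is an $M$-norm.
   Context: $\mathbb{M}_n$ is the algebra of complex $n\times n$ matrices with identity $I$. The dual norm is $\|Y\|_*=\sup\{|\mathrm{Tr}(Y^*X)| : X\in\mathbb{M}_n,\ \|X\|\le 1\}$. A norm $\|\cdot\|$ on $\mathbb{M}_n$ is an $M$-norm if $\left\|\sum_{i=1}^k C_i^*X_iC_i\right\|\le \max_{1\le i\le k}\|X_i\|$ for all $k$, all $X_i\in\mathbb{M}_n$ and all $C_i\in\mathbb{M}_n$ with $\sum_{i=1}^k C_i^*C_i=I$. It is an $L$-norm if $\sum_{i=1}^k\|C_iXC_i^*\|\le\|X\|$ for all $k$, all $X\in\mathbb{M}_n$ and all $C_i$ with $\sum_{i=1}^k C_i^*C_i=I$. *)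

From HB Require Import structures.
From mathcomp Require Import all_boot all_order all_algebra.
From mathcomp Require Import complex.
From mathcomp Require Import boolp classical_sets reals.
Set Implicit Arguments. Unset Strict Implicit. Unset Printing Implicit Defensive.
Import Order.TTheory GRing.Theory Num.Theory.
Local Open Scope ring_scope.

Definition cmod {R : realType} (z : R[i]) : R := ComplexField.Normc.normc z.

Definition adjmx {R : realType} {n : nat} (A : 'M[R[i]]_n) : 'M[R[i]]_n :=
  (map_mx (@conjc R) A)^T.

Definition is_norm {R : realType} {n : nat} (N : 'M[R[i]]_n -> R) : Prop :=
  [/\ forall X, 0 <= N X,
      forall X, N X = 0 -> X = 0,
      forall (a : R[i]) X, N (a *: X) = cmod a * N X &
      forall X Y, N (X + Y) <= N X + N Y].

Definition dual_norm {R : realType} {n : nat} (N : 'M[R[i]]_n -> R)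
    (Y : 'M[R[i]]_n) : R :=
  sup [set cmod (\tr (adjmx Y *m X)) | X in [set X | N X <= 1]].

Definition is_Mnorm {R : realType} {n : nat} (N : 'M[R[i]]_n -> R) : Prop :=
  forall (k : nat) (X C : 'I_k -> 'M[R[i]]_n),
    \sum_(i < k) adjmx (C i) *m C i = 1%:M ->
    N (\sum_(i < k) adjmx (C i) *m X i *m C i) <= \big[Num.max/0]_(i < k) N (X i).

Definition is_Lnorm {R : realType} {n : nat} (N : 'M[R[i]]_n -> R) : Prop :=
  forall (k : nat) (X : 'M[R[i]]_n) (C : 'I_k -> 'M[R[i]]_n),
    \sum_(i < k) adjmx (C i) *m C i = 1%:M ->
    \sum_(i < k) N (C i *m X *m adjmx (C i)) <= N X.

From HB Require Import structures.
From mathcomp Require Import all_boot all_order all_algebra.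
From mathcomp Require Import complex.
From mathcomp Require Import boolp classical_sets reals.
From mathcomp Require Import ring lra.
Set Implicit Arguments. Unset Strict Implicit. Unset Printing Implicit Defensive.
Import Order.TTheory GRing.Theory Num.Theory.
Local Open Scope ring_scope.
Local Open Scope complex_scope.
Local Open Scope classical_set_scope.

(* The trace pairing <Y, X> = tr (Y^* X) satisfies <Y, C^* X C> = <C Y C^*, X>,
   so the maps X |-> C_i^* X C_i and Y |-> C_i Y C_i^* are mutually adjoint.
   Through Hoelder's inequality and almost norming vectors rotated by suitable
   phases, an M-norm bound for one norm becomes an L-norm bound for the other,
   and an L-norm bound becomes an M-norm bound.  This only needs N and its dual
   norm to norm each other: for the dual norm this is its definition, for N it
   is the bidual theorem, obtained from a finite-dimensional Hahn-Banach
   extension.  The dual norm is finite by the equivalence of norms in finite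
   dimension. *)

Section ComplexModulus.
Variable R : realType.
Implicit Types (z w : R[i]) (r : R).

Lemma normC_cmod z : `|z| = (cmod z)%:C. Proof. by []. Qed.

Lemma cmod_ge0 z : 0 <= cmod z.
Proof. by rewrite -ler0c -normC_cmod normr_ge0. Qed.

Lemma cmodM z w : cmod (z * w) = cmod z * cmod w.
Proof. by apply: complexI; rewrite rmorphM /= -!normC_cmod normrM. Qed.

Lemma cmodD z w : cmod (z + w) <= cmod z + cmod w.
Proof. by rewrite -lecR rmorphD /= -!normC_cmod ler_normD. Qed.

Lemma cmodN z : cmod (- z) = cmod z.
Proof. by apply: complexI; rewrite -!normC_cmod normrN. Qed.

Lemma cmodR r : cmod r%:C = `|r|.
Proof. by rewrite /cmod /ComplexField.Normc.normc /= expr0n /= addr0 sqrtr_sqr. Qed.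

Lemma cmod0 : cmod (0 : R[i]) = 0.
Proof. by rewrite (cmodR 0) normr0. Qed.

Lemma cmod1 : cmod (1 : R[i]) = 1.
Proof. by rewrite (cmodR 1) normr1. Qed.

Lemma cmodi : cmod ('i : R[i]) = 1.
Proof. by rewrite /cmod /= expr0n /= add0r expr1n sqrtr1. Qed.

Lemma cmodJ z : cmod (conjc z) = cmod z.
Proof. by case: z => a b; rewrite /cmod /= sqrrN. Qed.

Lemma cmodV z : cmod z^-1 = (cmod z)^-1.
Proof. exact: ComplexField.Normc.normcV. Qed.

Lemma cmod_eq0 z : (cmod z == 0) = (z == 0).
Proof.
apply/eqP/eqP => [|->]; last exact: cmod0.
exact: ComplexField.Normc.eq0_normc.
Qed.

Lemma mulJc z : conjc z * z = ((cmod z) ^+ 2)%:C.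
Proof.
case: z => a b; rewrite /cmod /= sqr_sqrtr ?addr_ge0 ?sqr_ge0 //.
by apply/eqP; rewrite eq_complex /=; apply/andP; split; apply/eqP; ring.
Qed.

Lemma normr_Re_le z : `|complex.Re z| <= cmod z.
Proof.
case: z => a b; rewrite /cmod /= -sqrtr_sqr.
by apply: ler_wsqrtr; rewrite lerDl sqr_ge0.
Qed.

Lemma normr_Im_le z : `|complex.Im z| <= cmod z.
Proof.
case: z => a b; rewrite /cmod /= -sqrtr_sqr.
by apply: ler_wsqrtr; rewrite lerDr sqr_ge0.
Qed.

Lemma cmod_le_ReIm z : cmod z <= `|complex.Re z| + `|complex.Im z|.
Proof.
rewrite {1}[z]complexE; apply: (le_trans (cmodD _ _)).
by rewrite !cmodM cmodi mul1r !cmodR.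
Qed.

Lemma cmod_sum (I : Type) (s : seq I) (P : pred I) (F : I -> R[i]) :
  cmod (\sum_(i <- s | P i) F i) <= \sum_(i <- s | P i) cmod (F i).
Proof.
elim/big_rec2: _ => [|i y1 y2 _ IH]; first by rewrite cmod0.
by apply: (le_trans (cmodD _ _)); rewrite lerD2l.
Qed.

Lemma phase_rotation z : exists w, cmod w = 1 /\ w * z = (cmod z)%:C.
Proof.
have [->|z0] := eqVneq z 0; first by exists 1; rewrite cmod1 mul1r cmod0.
have c0 : cmod z != 0 by rewrite cmod_eq0.
exists (conjc z / (cmod z)%:C); split.
  by rewrite cmodM cmodV cmodJ cmodR ger0_norm ?cmod_ge0 ?divff.
by rewrite mulrAC mulJc -rmorphV ?unitfE // -rmorphM /= expr2 mulrK ?unitfE.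
Qed.

End ComplexModulus.

Lemma exists_center (R : realType) (T : Type) (t0 : T) (x g : T -> R) :
  (forall s t, x s - x t <= g s + g t) -> exists c, forall t, `|c - x t| <= g t.
Proof.
move=> xg; pose E := range (fun s => x s - g s).
have ubE t : ubound E (x t + g t) by move=> _ [s _ <-]; have := xg s t; lra.
exists (sup E) => t; rewrite ler_norml; apply/andP; split.
  suff : x t - g t <= sup E by lra.
  by apply: ub_le_sup; [exists (x t + g t) | exists t].
suff : sup E <= x t + g t by lra.
by apply: ge_sup; [exists (x t0 - g t0); exists t0 | exact: ubE].
Qed.

Lemma exists_center_complex (R : realType) (T : Type) (t0 : T) (z : T -> R[i])
    (g : T -> R) :
  (forall s t, cmod (z s - z t) <= g s + g t) ->
  exists c, forall t, cmod (c - z t) <= 2 * g t.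
Proof.
move=> zg.
have [a Ha] : exists a, forall t, `|a - complex.Re (z t)| <= g t.
  apply: (exists_center t0) => s t; have := normr_Re_le (z s - z t).
  by rewrite raddfB /= => /(le_trans (ler_norm _)) /le_trans; apply.
have [b Hb] : exists b, forall t, `|b - complex.Im (z t)| <= g t.
  apply: (exists_center t0) => s t; have := normr_Im_le (z s - z t).
  by rewrite raddfB /= => /(le_trans (ler_norm _)) /le_trans; apply.
exists (a +i* b) => t; apply: (le_trans (cmod_le_ReIm _)).
by rewrite raddfB raddfB /=; have := Ha t; have := Hb t; lra.
Qed.

Lemma ler_add_natmul_eps (R : numFieldType) (x y : R) k :
  (forall e, 0 < e -> x <= y + k%:R * e) -> x <= y.
Proof.
move=> H; apply/ler_addgt0Pr => e e0; have k0 : 0 < k.+1%:R :> R by [].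
apply: (le_trans (H _ (divr_gt0 e0 k0))).
rewrite lerD2l mulrCA; apply: ler_piMr; first exact: ltW.
by rewrite ler_pdivrMr // mul1r ler_nat.
Qed.

Section CoordinateBound.
Variables (R : realType) (V : lmodType R[i]) (N : V -> R).
Hypothesis N_ge0 : forall x, 0 <= N x.
Hypothesis N_eq0 : forall x, N x = 0 -> x = 0.
Hypothesis NZ : forall a x, N (a *: x) = cmod a * N x.
Hypothesis ND : forall x y, N (x + y) <= N x + N y.

Lemma normv0 : N 0 = 0.
Proof. by rewrite -(scale0r 0) NZ cmod0 mul0r. Qed.

Lemma normvN x : N (- x) = N x.
Proof. by rewrite -scaleN1r NZ cmodN cmod1 mul1r. Qed.

Lemma normv_sum (I : Type) (s : seq I) (P : pred I) (F : I -> V) :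
  N (\sum_(i <- s | P i) F i) <= \sum_(i <- s | P i) N (F i).
Proof.
elim/big_rec2: _ => [|i y1 y2 _ IH]; first by rewrite normv0.
by apply: (le_trans (ND _ _)); rewrite lerD2l.
Qed.

Definition lincomb m (a : 'I_m -> R[i]) (b : 'I_m -> V) := \sum_j a j *: b j.

Definition independent m (b : 'I_m -> V) :=
  forall a, lincomb a b = 0 -> forall j, a j = 0.

Lemma lincombB m (a a' : 'I_m -> R[i]) b :
  lincomb a b - lincomb a' b = lincomb (fun j => a j - a' j) b.
Proof. by rewrite /lincomb -sumrB; apply: eq_bigr => j _; rewrite scalerBl. Qed.

Lemma normv_lincomb_le m (a : 'I_m -> R[i]) b :
  N (lincomb a b) <= \sum_j cmod (a j) * N (b j).
Proof.
by apply: (le_trans (normv_sum _ _ _)); apply: ler_sum => j _; rewrite NZ.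
Qed.

Definition ord_cons m (t : R[i]) (a : 'I_m -> R[i]) (j : 'I_m.+1) :=
  if unlift ord0 j is Some i then a i else t.

Lemma lincomb_cons m t (a : 'I_m -> R[i]) (b : 'I_m.+1 -> V) :
  lincomb (ord_cons t a) b = t *: b ord0 + lincomb a (b \o lift ord0).
Proof.
rewrite /lincomb big_ord_recl /ord_cons unlift_none; congr (_ + _).
by apply: eq_bigr => i _; rewrite liftK.
Qed.

Lemma lincomb_recl m (a : 'I_m.+1 -> R[i]) (b : 'I_m.+1 -> V) :
  lincomb a b = a ord0 *: b ord0 + lincomb (a \o lift ord0) (b \o lift ord0).
Proof. by rewrite /lincomb big_ord_recl. Qed.

Lemma independent_behead m (b : 'I_m.+1 -> V) :
  independent b -> independent (b \o lift ord0).
Proof.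
move=> bI a a0 i; have := bI (ord_cons 0 a) _ (lift ord0 i).
by rewrite /ord_cons liftK; apply; rewrite lincomb_cons a0 scale0r addr0.
Qed.

Section ConsStep.
Variables (m : nat) (b : 'I_m.+1 -> V) (K : R).
Let e := b ord0.
Let b' : 'I_m -> V := b \o lift ord0.
Hypothesis bI : independent b.
Hypothesis K_ge0 : 0 <= K.
Hypothesis b'K : forall a j, cmod (a j) <= K * N (lincomb a b').

Lemma coef_center : exists c : 'I_m -> R[i],
  forall j a, cmod (c j - a j) <= 2 * (K * N (e + lincomb a b')).
Proof.
have center j : exists cj, forall a, cmod (cj - a j) <= 2 * (K * N (e + lincomb a b')).
  apply: (exists_center_complex (fun _ => 0) (z := fun a => a j)) => a1 a2.
  rewrite -mulrDr; apply: (le_trans (b'K (fun j => a1 j - a2 j) j)).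
  rewrite ler_wpM2l // -lincombB.
  have -> : lincomb a1 b' - lincomb a2 b' = (e + lincomb a1 b') - (e + lincomb a2 b').
    by rewrite opprD addrACA subrr add0r.
  by rewrite (le_trans (ND _ _)) // normvN.
by have [c Hc] := choice center; exists c.
Qed.

(* Otherwise [e + lincomb a b'] tends to 0 along some coefficient vectors [a],
   which then tend to the center [c], forcing [e + lincomb c b' = 0]. *)
Lemma dist_span_gt0 : exists2 d, 0 < d & forall a, d <= N (e + lincomb a b').
Proof.
pose f a := N (e + lincomb a b').
have [//|not_bounded] := pselect (exists2 d, 0 < d & forall a, d <= f a).
have small d : 0 < d -> exists a, f a < d.
  move=> d0; apply: contrapT => no_a; apply: not_bounded; exists d => // a.
  by rewrite leNgt; apply/negP => lt; apply: no_a; exists a.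
exfalso; have [c Hc] := coef_center.
pose S := \sum_j N (b' j).
have S_ge0 : 0 <= S by rewrite sumr_ge0.
have fc_le a : f c <= (1 + 2 * K * S) * f a.
  rewrite /f.
  have -> : e + lincomb c b' = (e + lincomb a b') + (lincomb c b' - lincomb a b').
    by rewrite [lincomb c b' - _]addrC addrA addrK.
  apply: (le_trans (ND _ _)); rewrite mulrDl mul1r lerD2l lincombB.
  apply: (le_trans (normv_lincomb_le _ _)).
  rewrite /S mulr_sumr mulr_suml; apply: ler_sum => j _.
  by rewrite mulrAC ler_wpM2r // -mulrA Hc.
have fc0 : f c = 0.
  have M0 : 0 < 1 + 2 * K * S by have := mulr_ge0 K_ge0 S_ge0; nra.
  apply/eqP; rewrite eq_le N_ge0 andbT; apply/ler_addgt0Pr => eps eps0.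
  have [a Ha] := small (eps / (1 + 2 * K * S)) (divr_gt0 eps0 M0).
  rewrite add0r (le_trans (fc_le a)) // mulrC -ler_pdivlMr //; exact: ltW.
have c_null : lincomb (ord_cons 1 c) b = 0 by rewrite lincomb_cons scale1r (N_eq0 fc0).
by have := @bI _ c_null ord0; rewrite /ord_cons unlift_none => /eqP; rewrite oner_eq0.
Qed.

Lemma coord_bound_cons :
  exists2 K', 0 <= K' & forall a j, cmod (a j) <= K' * N (lincomb a b).
Proof.
have [d d0 dle] := dist_span_gt0.
have d_ge0 : 0 <= d := ltW d0.
have q_ge0 : 0 <= 1 + N e / d by rewrite addr_ge0 // divr_ge0.
exists (K * (1 + N e / d) + d^-1); first by rewrite addr_ge0 ?invr_ge0 // mulr_ge0.
move=> a j; set x := lincomb a b; have x_ge0 := N_ge0 x.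
have head_le : cmod (a ord0) <= N x / d.
  have [->|t0] := eqVneq (a ord0) 0; first by rewrite cmod0 divr_ge0.
  have -> : x = a ord0 *: (e + lincomb (fun i => (a ord0)^-1 * a (lift ord0 i)) b').
    rewrite /x lincomb_recl scalerDr /lincomb scaler_sumr; congr (_ + _).
    by apply: eq_bigr => i _; rewrite scalerA mulrA mulfV // mul1r.
  by rewrite NZ ler_pdivlMr // ler_wpM2l ?cmod_ge0.
have tail_le : N (lincomb (a \o lift ord0) b') <= (1 + N e / d) * N x.
  have -> : lincomb (a \o lift ord0) b' = x - a ord0 *: e.
    by rewrite /x lincomb_recl addrC addKr.
  apply: (le_trans (ND _ _)); rewrite normvN NZ mulrDl mul1r lerD2l.
  have -> : N e / d * N x = N x / d * N e by ring.
  by rewrite ler_wpM2r.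
case: (unliftP ord0 j) => [i ->|->].
  apply: (le_trans (b'K (a \o lift ord0) i)).
  apply: (le_trans (ler_wpM2l K_ge0 tail_le)).
  by rewrite mulrA [leRHS]mulrDl lerDl mulr_ge0 // invr_ge0.
apply: (le_trans head_le); rewrite mulrC mulrDl lerDr.
by rewrite mulr_ge0 // mulr_ge0.
Qed.

End ConsStep.

Lemma coord_bound m (b : 'I_m -> V) : independent b ->
  exists2 K, 0 <= K & forall a j, cmod (a j) <= K * N (lincomb a b).
Proof.
elim: m b => [|m IH] b bI; first by exists 0 => // a [].
have [K K0 HK] := IH _ (independent_behead bI).
exact: (coord_bound_cons bI K0 HK).
Qed.

End CoordinateBound.

Section HahnBanach.
Variables (R : realType) (V : lmodType R[i]) (N : V -> R).
Hypothesis N_ge0 : forall x, 0 <= N x.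
Hypothesis NZ : forall a x, N (a *: x) = cmod a * N x.
Hypothesis ND : forall x y, N (x + y) <= N x + N y.

Record dominated (S : set V) (F : V -> R) : Prop := Dominated {
  dom0 : S 0;
  domD : forall x y, S x -> S y -> S (x + y);
  domZ : forall (t : R) x, S x -> S (t%:C *: x);
  dom_additive : forall x y, S x -> S y -> F (x + y) = F x + F y;
  dom_scalable : forall (t : R) x, S x -> F (t%:C *: x) = t * F x;
  dom_le : forall x, S x -> F x <= N x }.

Definition adjoin (S : set V) (b : V) : set V :=
  [set x | exists s t, S s /\ x = s + t%:C *: b].

Section Extension.
Variables (S : set V) (F : V -> R) (b : V) (c : R).
Hypothesis SF : dominated S F.
Hypothesis Sb : ~ S b.
Hypothesis c_lo : forall s, S s -> F s - c <= N (s - b).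
Hypothesis c_hi : forall s, S s -> F s + c <= N (s + b).

Lemma adjoin_coord_uniq s1 t1 s2 t2 : S s1 -> S s2 ->
  s1 + t1%:C *: b = s2 + t2%:C *: b -> s1 = s2 /\ t1 = t2.
Proof.
move=> S1 S2; have [-> E|t12 E] := eqVneq t1 t2; first by split => //; exact: (addIr _ E).
exfalso; apply: Sb.
have Eb : (t1 - t2)%:C *: b = s2 + (-1)%:C *: s1.
  rewrite rmorphN1 scaleN1r rmorphB scalerBl -[s2](addrK (t2%:C *: b)) -E.
  by rewrite addrAC [s1 + _]addrC addrK.
have -> : b = ((t1 - t2)^-1)%:C *: (s2 + (-1)%:C *: s1).
  by rewrite -Eb scalerA -rmorphM mulVf ?subr_eq0 // scale1r.
by apply: (domZ SF); apply: (domD SF) => //; apply: (domZ SF).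
Qed.

(* For [t != 0], dividing by [|t|] reduces the claim to [c_hi] (if [t > 0])
   or [c_lo] (if [t < 0]) at the point [|t|^-1 s]. *)
Lemma dominated_line s t : S s -> F s + t * c <= N (s + t%:C *: b).
Proof.
move=> Ss.
have rescale u v d : 0 < u -> F (u^-1%:C *: s) + d <= N (u^-1%:C *: s + v) ->
    F s + u * d <= N (s + u%:C *: v).
  move=> u0 h; have := ler_wpM2l (ltW u0) h.
  have uK : u%:C *: (u^-1%:C *: s) = s.
    by rewrite scalerA -rmorphM mulfV ?gt_eqF // scale1r.
  have uN x : u * N x = N (u%:C *: x) by rewrite NZ cmodR gtr0_norm.
  have Fs : u * F (u^-1%:C *: s) = F s.
    by rewrite -(dom_scalable SF _ (domZ SF _ Ss)) uK.
  by rewrite mulrDr Fs uN scalerDr uK.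
have [t0|t0|->] := ltgtP t 0; last by rewrite mul0r addr0 scale0r addr0 (dom_le SF).
  have := rescale (- t) (- b) (- c); rewrite oppr_gt0 mulrNN rmorphN scaleNr scalerN.
  by rewrite opprK; apply => //; apply: c_lo; apply: (domZ SF).
by apply: rescale => //; apply: c_hi; apply: (domZ SF).
Qed.

Lemma dominated_extend_at :
  exists F', [/\ dominated (adjoin S b) F', forall x, S x -> F' x = F x & F' b = c].
Proof.
pose F' x := let p := xget (0, 0) (fun p : V * R => S p.1 /\ x = p.1 + p.2%:C *: b) in
  F p.1 + p.2 * c.
have F'E s t : S s -> F' (s + t%:C *: b) = F s + t * c.
  move=> Ss; rewrite /F'.
  case: xgetP => [[s' t'] /= _ [S' E]|]; last by move/(_ (s, t)); case.
  by have [-> ->] := adjoin_coord_uniq S' Ss (esym E).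
have F'S x : S x -> F' x = F x.
  by move=> Sx; have := F'E x 0 Sx; rewrite scale0r addr0 mul0r addr0.
have F0 : F 0 = 0 by have := dom_scalable SF 0 (dom0 SF); rewrite scale0r mul0r.
exists F'; split => //; last first.
  by have := F'E 0 1 (dom0 SF); rewrite scale1r add0r mul1r F0 add0r.
split.
- by exists 0, 0; rewrite scale0r addr0; split => //; apply: (dom0 SF).
- move=> _ _ [s1 [t1 [S1 ->]]] [s2 [t2 [S2 ->]]].
  exists (s1 + s2), (t1 + t2); split; first exact: (domD SF).
  by rewrite rmorphD scalerDl addrACA.
- move=> t _ [s [u [Ss ->]]]; exists (t%:C *: s), (t * u); split; first exact: (domZ SF).
  by rewrite scalerDr scalerA rmorphM.
- move=> _ _ [s1 [t1 [S1 ->]]] [s2 [t2 [S2 ->]]]; have S12 := domD SF S1 S2.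
  by rewrite addrACA -scalerDl -rmorphD !F'E // (dom_additive SF) //; ring.
- move=> t _ [s [u [Ss ->]]]; have Sts := domZ SF t Ss.
  by rewrite scalerDr scalerA -rmorphM !F'E // (dom_scalable SF) //; ring.
- by move=> _ [s [t [Ss ->]]]; rewrite F'E //; exact: dominated_line.
Qed.

End Extension.

Lemma dominated_extend S F b : dominated S F ->
  exists S' F', [/\ dominated S' F', forall x, S x -> S' x /\ F' x = F x & S' b].
Proof.
move=> SF; have [Sb|Sb] := pselect (S b); first by exists S, F.
have gap s1 s2 : S s1 -> S s2 -> F s1 - N (s1 - b) <= N (s2 + b) - F s2.
  move=> S1 S2; have := dom_le SF (domD SF S1 S2); rewrite (dom_additive SF) // => h1.
  have h2 : N (s1 + s2) <= N (s1 - b) + N (s2 + b).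
    by rewrite -[s1 + s2]addr0 -(addNr b) addrACA; apply: ND.
  lra.
pose E := [set F s - N (s - b) | s in S].
have E_ub s : S s -> ubound E (N (s + b) - F s) by move=> Ss _ [s1 S1 <-]; apply: gap.
have E0 : E (F 0 - N (0 - b)) by exists 0 => //; apply: (dom0 SF).
have c_lo s : S s -> F s - sup E <= N (s - b).
  move=> Ss; suff : F s - N (s - b) <= sup E by lra.
  by apply: ub_le_sup; [exists (N (0 + b) - F 0); apply: E_ub (dom0 SF) | exists s].
have c_hi s : S s -> F s + sup E <= N (s + b).
  move=> Ss; suff : sup E <= N (s + b) - F s by lra.
  by apply: ge_sup; [exists (F 0 - N (0 - b)) | apply: E_ub].
have [F' [SF' F'F _]] := dominated_extend_at SF Sb c_lo c_hi.
exists (adjoin S b), F'; split => //.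
  by move=> x Sx; split; [exists x, 0; rewrite scale0r addr0 | exact: F'F].
by exists 0, 1; rewrite scale1r add0r; split => //; apply: (dom0 SF).
Qed.

Lemma dominated_zero : dominated [set 0] (fun _ => 0).
Proof.
split => //= [x y -> ->|t x ->|x y _ _|t x _].
- exact: addr0.
- exact: scaler0.
- by rewrite addr0.
- by rewrite mulr0.
Qed.

Lemma dominated_norming z :
  exists S F, [/\ dominated S F, S z & F z = N z].
Proof.
have [->|z0] := eqVneq z 0.
  exists [set 0], (fun _ => 0); split => //; first exact: dominated_zero.
  by rewrite (normv0 NZ).
have Sz : ~ [set 0] z by move/eqP; rewrite (negbTE z0).
have [|s ->|F [SF _ Fz]] := dominated_extend_at dominated_zero Sz (c := N z).
- by move=> s ->; rewrite !sub0r (normvN NZ); have := N_ge0 z; lra.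
- by rewrite !add0r.
by exists (adjoin [set 0] z), F; split => //; exists 0, 1; rewrite scale1r add0r.
Qed.

Lemma dominated_norming_seq z (bs : seq V) :
  exists S F, [/\ dominated S F, S z, F z = N z & forall b, b \in bs -> S b].
Proof.
elim: bs => [|b bs [S [F [SF Sz Fz Sbs]]]].
  by have [S [F [SF Sz Fz]]] := dominated_norming z; exists S, F.
have [S' [F' [SF' SS' S'b]]] := dominated_extend b SF.
exists S', F'; have [S'z F'z] := SS' z Sz; split; rewrite ?F'z //.
by move=> x; rewrite in_cons => /orP[/eqP-> //|/Sbs /SS'[]].
Qed.

End HahnBanach.

Section TracePairing.
Variables (R : realType) (n : nat).
Implicit Types (A B X Y : 'M[R[i]]_n).

Definition hsdot Y X := \tr (adjmx Y *m X).

Lemma adjmxE A i j : adjmx A i j = conjc (A j i).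
Proof. by rewrite !mxE. Qed.

Lemma adjmxM A B : adjmx (A *m B) = adjmx B *m adjmx A.
Proof. by rewrite /adjmx map_mxM trmx_mul. Qed.

Lemma adjmxK : involutive (@adjmx R n).
Proof. by move=> A; apply/matrixP => i j; rewrite !adjmxE conjcK. Qed.

Lemma adjmxZ a A : adjmx (a *: A) = conjc a *: adjmx A.
Proof. by apply/matrixP => i j; rewrite !mxE rmorphM. Qed.

Lemma adjmx_sum k (F : 'I_k -> 'M[R[i]]_n) : adjmx (\sum_i F i) = \sum_i adjmx (F i).
Proof.
apply/matrixP => i j; rewrite adjmxE !summxE rmorph_sum.
by apply: eq_bigr => l _; rewrite adjmxE.
Qed.

Lemma mxtrace_adj A : \tr (adjmx A) = conjc (\tr A).
Proof. by rewrite /mxtrace rmorph_sum; apply: eq_bigr => i _; rewrite adjmxE. Qed.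

Lemma hsdotC Y X : hsdot X Y = conjc (hsdot Y X).
Proof. by rewrite /hsdot -mxtrace_adj adjmxM adjmxK. Qed.

Lemma hsdot_sumr k Y (F : 'I_k -> 'M[R[i]]_n) :
  hsdot Y (\sum_i F i) = \sum_i hsdot Y (F i).
Proof. by rewrite /hsdot mulmx_sumr raddf_sum. Qed.

Lemma hsdot_suml k (F : 'I_k -> 'M[R[i]]_n) X :
  hsdot (\sum_i F i) X = \sum_i hsdot (F i) X.
Proof. by rewrite /hsdot adjmx_sum mulmx_suml raddf_sum. Qed.

Lemma hsdotZr a Y X : hsdot Y (a *: X) = a * hsdot Y X.
Proof. by rewrite /hsdot -scalemxAr mxtraceZ. Qed.

Lemma hsdotZl a Y X : hsdot (a *: Y) X = conjc a * hsdot Y X.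
Proof. by rewrite /hsdot adjmxZ -scalemxAl mxtraceZ. Qed.

Lemma hsdot0r Y : hsdot Y 0 = 0.
Proof. by rewrite /hsdot mulmx0 mxtrace0. Qed.

Lemma hsdot_conjr Y C X : hsdot Y (adjmx C *m X *m C) = hsdot (C *m Y *m adjmx C) X.
Proof. by rewrite /hsdot !adjmxM adjmxK !mulmxA mxtrace_mulC !mulmxA. Qed.

Lemma hsdot_conjl Y C X : hsdot (adjmx C *m Y *m C) X = hsdot Y (C *m X *m adjmx C).
Proof. by have := hsdot_conjr Y (adjmx C) X; rewrite adjmxK => ->. Qed.

Lemma hsdotE Y X : hsdot Y X = \sum_i \sum_j conjc (Y j i) * X j i.
Proof.
rewrite /hsdot /mxtrace; apply: eq_bigr => i _; rewrite mxE.
by apply: eq_bigr => j _; rewrite adjmxE.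
Qed.

Lemma hsdot_repr (g : 'M[R[i]]_n -> R[i]) :
  (forall X Y, g (X + Y) = g X + g Y) -> (forall a X, g (a *: X) = a * g X) ->
  exists Y, forall X, hsdot Y X = g X.
Proof.
move=> gD gZ; have g0 : g 0 = 0 by rewrite -(scale0r 0) gZ mul0r.
exists (\matrix_(i, j) conjc (g (delta_mx i j))) => X.
rewrite {2}[X]matrix_sum_delta hsdotE (big_morph _ gD g0) exchange_big /=.
apply: eq_bigr => i _; rewrite (big_morph _ gD g0); apply: eq_bigr => j _.
by rewrite mxE conjcK gZ mulrC.
Qed.

End TracePairing.

Section Complexify.
Variables (R : realType) (V : lmodType R[i]) (N : V -> R) (F : V -> R).
Hypothesis NZ : forall a x, N (a *: x) = cmod a * N x.
Hypothesis FD : forall x y, F (x + y) = F x + F y.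
Hypothesis FR : forall (t : R) x, F (t%:C *: x) = t * F x.
Hypothesis F_le : forall x, F x <= N x.

Definition complexify x : R[i] := (F x)%:C - 'i * (F ('i *: x))%:C.

Lemma complexifyD x y : complexify (x + y) = complexify x + complexify y.
Proof. by rewrite /complexify scalerDr !FD !rmorphD; ring. Qed.

Lemma complexifyR (t : R) x : complexify (t%:C *: x) = t%:C * complexify x.
Proof.
rewrite /complexify.
have -> : 'i *: (t%:C *: x) = t%:C *: ('i *: x) by rewrite !scalerA mulrC.
by rewrite !FR !rmorphM; ring.
Qed.

Lemma complexifyi x : complexify ('i *: x) = 'i * complexify x.
Proof.
have ii : 'i * 'i = -1 :> R[i] by rewrite -expr2 sqr_i.
have FN y : F (- y) = - F y by rewrite -scaleN1r -(rmorphN1 (real_complex R)) FR mulN1r.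
rewrite /complexify scalerA ii scaleN1r FN rmorphN mulrBr mulrA ii; ring.
Qed.

Lemma complexifyZ a x : complexify (a *: x) = a * complexify x.
Proof.
have aE := complexE a.
rewrite {1}aE scalerDl -scalerA complexifyD complexifyi !complexifyR.
by rewrite [in RHS]aE mulrDl -mulrA.
Qed.

Lemma Re_complexify x : complex.Re (complexify x) = F x.
Proof. by rewrite /complexify /=; ring. Qed.

(* Rotating [x] by a unimodular [w] makes [complexify (w x)] real and
   equal to [cmod (complexify x)]. *)
Lemma cmod_complexify_le x : cmod (complexify x) <= N x.
Proof.
have [w [w1 wE]] := phase_rotation (complexify x).
rewrite -[cmod _]/(complex.Re (cmod (complexify x))%:C) -wE -complexifyZ.
by rewrite Re_complexify (le_trans (F_le _)) // NZ w1 mul1r.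
Qed.

End Complexify.

Section DualNorm.
Variables (R : realType) (n : nat) (N : 'M[R[i]]_n -> R).
Hypothesis normN : is_norm N.
Implicit Types (X Y Z : 'M[R[i]]_n).

Let N_ge0 X : 0 <= N X. Proof. by case: normN. Qed.
Let N_eq0 X : N X = 0 -> X = 0. Proof. by case: normN => _ + _ _; apply. Qed.
Let NZ a X : N (a *: X) = cmod a * N X. Proof. by case: normN. Qed.
Let ND X Y : N (X + Y) <= N X + N Y. Proof. by case: normN. Qed.
Let N0 : N 0 = 0. Proof. exact: normv0 NZ. Qed.

Local Notation D := (dual_norm N).

Lemma entry_bound : exists2 K, 0 <= K & forall X i j, cmod (X i j) <= K * N X.
Proof.
pose b j : 'M[R[i]]_n := vec_mx (delta_mx 0 j).
have mxvec_lincomb a k : mxvec (lincomb a b) 0 k = a k.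
  rewrite /lincomb linear_sum summxE (bigD1 k) //= big1 ?addr0.
    by rewrite linearZ /= vec_mxK !mxE !eqxx mulr1.
  by move=> j /negbTE jk; rewrite linearZ /= vec_mxK !mxE eq_sym jk andbF mulr0.
have bI : independent b by move=> a a0 k; rewrite -mxvec_lincomb a0 linear0 mxE.
have [K K0 HK] := coord_bound N_ge0 N_eq0 NZ ND bI.
exists K => // X i j; have := HK (fun k => mxvec X 0 k) (mxvec_index i j).
suff -> : lincomb (fun k => mxvec X 0 k) b = X by rewrite mxvecE.
by apply: (can_inj mxvecK); apply/rowP => k; rewrite mxvec_lincomb.
Qed.

Lemma hsdot_bound Y : exists2 K, 0 <= K & forall X, cmod (hsdot Y X) <= K * N X.
Proof.
have [K K0 HK] := entry_bound.
exists (K * \sum_i \sum_j cmod (Y j i)).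
  by rewrite mulr_ge0 // sumr_ge0 // => i _; rewrite sumr_ge0 // => j _; apply: cmod_ge0.
move=> X; rewrite hsdotE; apply: (le_trans (cmod_sum _ _ _)).
rewrite mulr_sumr mulr_suml; apply: ler_sum => i _; apply: (le_trans (cmod_sum _ _ _)).
rewrite mulr_sumr mulr_suml; apply: ler_sum => j _.
by rewrite cmodM cmodJ mulrAC [leRHS]mulrC ler_wpM2l ?cmod_ge0.
Qed.

Lemma has_sup_dual Y : has_sup [set cmod (hsdot Y X) | X in [set X | N X <= 1]].
Proof.
have [K K0 HK] := hsdot_bound Y.
split; first by exists (cmod (hsdot Y 0)), 0; rewrite //= N0.
exists K => _ [X /= X1 <-]; apply: (le_trans (HK X)).
by rewrite -[leRHS]mulr1 ler_wpM2l.
Qed.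

Lemma dual_norm_ge Y X : N X <= 1 -> cmod (hsdot Y X) <= D Y.
Proof. by move=> X1; apply: ub_le_sup; [have [] := has_sup_dual Y | exists X]. Qed.

Lemma dual_norm_le Y c : (forall X, N X <= 1 -> cmod (hsdot Y X) <= c) -> D Y <= c.
Proof.
move=> Hc; apply: ge_sup; first by have [] := has_sup_dual Y.
by move=> _ [X X1 <-]; apply: Hc.
Qed.

Lemma dual_norm_ge0 Y : 0 <= D Y.
Proof. by have := @dual_norm_ge Y 0; rewrite N0 hsdot0r cmod0; apply. Qed.

Lemma hsdot_le_dual Y X : cmod (hsdot Y X) <= D Y * N X.
Proof.
have [X0|NX0] := eqVneq (N X) 0; first by rewrite (N_eq0 X0) hsdot0r cmod0 N0 mulr0.
have NX_gt0 : 0 < N X by rewrite lt_def NX0 N_ge0.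
have := @dual_norm_ge Y ((N X)^-1%:C *: X).
rewrite NZ hsdotZr cmodM cmodR ger0_norm ?invr_ge0 // mulVf // lexx => /(_ isT).
by rewrite ler_pdivrMl // mulrC.
Qed.

Lemma dual_norm_approx Y e : 0 < e ->
  exists X, N X <= 1 /\ D Y - e < cmod (hsdot Y X).
Proof.
by move=> e0; have [_ [X X1 <-] ?] := sup_adherent e0 (has_sup_dual Y); exists X.
Qed.

Lemma dual_normZ_le a Y : D (a *: Y) <= cmod a * D Y.
Proof.
apply: dual_norm_le => X X1; rewrite hsdotZl cmodM cmodJ.
by rewrite ler_wpM2l ?cmod_ge0 ?dual_norm_ge.
Qed.

Lemma dual_norming Z : exists Y, D Y <= 1 /\ N Z <= cmod (hsdot Y Z).
Proof.
pose bs : seq 'M[R[i]]_n := [seq delta_mx i j | i <- enum 'I_n, j <- enum 'I_n] ++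
           [seq 'i%C *: delta_mx i j | i <- enum 'I_n, j <- enum 'I_n].
have [S [F [SF SZ FZ Sbs]]] := dominated_norming_seq N_ge0 NZ ND Z bs.
have S_full X : S X.
  rewrite [X]matrix_sum_delta.
  apply: (big_ind S) => [||i _]; [exact: (dom0 SF) | exact: (domD SF) |].
  apply: (big_ind S) => [||j _]; [exact: (dom0 SF) | exact: (domD SF) |].
  rewrite [X i j]complexE scalerDl mulrC -scalerA.
  apply: (domD SF); apply: (domZ SF); apply: Sbs; rewrite mem_cat.
    by rewrite (allpairs_f (fun i j => delta_mx i j : 'M_n)) ?mem_enum.
  by rewrite (allpairs_f (fun i j => 'i%C *: delta_mx i j : 'M_n)) ?mem_enum ?orbT.
have FD X Y : F (X + Y) = F X + F Y by apply: (dom_additive SF).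
have FR (t : R) X : F (t%:C *: X) = t * F X by apply: (dom_scalable SF).
have F_le X : F X <= N X by apply: (dom_le SF).
have [Y YF] := hsdot_repr (complexifyD FD) (complexifyZ FD FR).
exists Y; split.
  apply: dual_norm_le => X X1; rewrite YF.
  exact: le_trans (cmod_complexify_le NZ FD FR F_le X) X1.
by rewrite YF -FZ -(Re_complexify F) (le_trans (ler_norm _)) ?normr_Re_le.
Qed.
End DualNorm.

(* Both [(dual_norm N, N)] and [(N, dual_norm N)] satisfy these hypotheses,
   by [dual_norm_approx] and by [dual_norming] respectively. *)
Section DualPair.
Variables (R : realType) (n : nat) (A B : 'M[R[i]]_n -> R).
Hypothesis A_ge0 : forall Y, 0 <= A Y.
Hypothesis B_ge0 : forall X, 0 <= B X.
Hypothesis BZ : forall a X, B (a *: X) <= cmod a * B X.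
Hypothesis hsdot_le : forall Y X, cmod (hsdot Y X) <= A Y * B X.
Hypothesis A_approx : forall Y e, 0 < e ->
  exists X, B X <= 1 /\ A Y - e < cmod (hsdot Y X).

Lemma dual_pair_Mnorm_Lnorm : is_Mnorm B -> is_Lnorm A.
Proof.
move=> BM k X C CC; pose W i := C i *m X *m adjmx (C i).
apply: (@ler_add_natmul_eps _ _ _ k) => e e0.
have [Xs XsW] := choice (fun i => A_approx (W i) e0).
have [w wXs] := choice (fun i => phase_rotation (hsdot (W i) (Xs i))).
pose X' i := w i *: Xs i.
have X'1 i : B (X' i) <= 1.
  by rewrite (le_trans (BZ _ _)) // (wXs i).1 mul1r (XsW i).1.
have sum_hsdot : \sum_i cmod (hsdot (W i) (Xs i)) <= A X.
  have -> : \sum_i cmod (hsdot (W i) (Xs i)) =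
      cmod (hsdot X (\sum_i adjmx (C i) *m X' i *m C i)).
    rewrite hsdot_sumr (eq_bigr (fun i => (cmod (hsdot (W i) (Xs i)))%:C)).
      by rewrite -rmorph_sum cmodR ger0_norm // sumr_ge0 // => i _; apply: cmod_ge0.
    by move=> i _; rewrite hsdot_conjr hsdotZr (wXs i).2.
  apply: (le_trans (hsdot_le _ _)); rewrite -[leRHS]mulr1 ler_wpM2l //.
  by apply: (le_trans (BM _ _ _ CC)); apply: bigmax_le.
have -> : k%:R * e = \sum_(i < k) e by rewrite sumr_const card_ord mulr_natl.
apply: (le_trans _ (lerD sum_hsdot (lexx _))); rewrite -big_split ler_sum // => i _ /=.
by have := (XsW i).2; rewrite -/(W i); lra.
Qed.

Lemma dual_pair_Lnorm_Mnorm : is_Lnorm B -> is_Mnorm A.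
Proof.
move=> BL k Y C CC; set m := \big[Num.max/0]_(i < k) A (Y i).
have m_ge0 : 0 <= m by apply: bigmax_ge_id.
apply/ler_addgt0Pr => e e0.
have [X [X1 AX]] := A_approx (\sum_i adjmx (C i) *m Y i *m C i) e0.
suff : cmod (hsdot (\sum_i adjmx (C i) *m Y i *m C i) X) <= m by lra.
rewrite hsdot_suml; apply: (le_trans (cmod_sum _ _ _)).
apply: (@le_trans _ _ (\sum_i m * B (C i *m X *m adjmx (C i)))).
  apply: ler_sum => i _; rewrite hsdot_conjl (le_trans (hsdot_le _ _)) //.
  by rewrite ler_wpM2r // le_bigmax.
by rewrite -mulr_sumr ler_piMr // (le_trans (BL _ _ _ CC)).
Qed.

End DualPair.

Theorem lemma2p6 (R : realType) (n : nat) (N : 'M[R[i]]_n -> R) :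
  is_norm N ->
  (is_Mnorm N <-> is_Lnorm (dual_norm N)) /\
  (is_Lnorm N <-> is_Mnorm (dual_norm N)).
Proof.
move=> normN.
have N_ge0 X : 0 <= N X by case: normN.
have NZ a X : N (a *: X) <= cmod a * N X by case: normN => _ _ -> _.
have DN Y X : cmod (hsdot Y X) <= N Y * dual_norm N X.
  by rewrite hsdotC cmodJ mulrC hsdot_le_dual.
have N_approx Y e : 0 < e -> exists X, dual_norm N X <= 1 /\ N Y - e < cmod (hsdot Y X).
  move=> e0; have [X [X1 NY]] := dual_norming normN Y.
  by exists X; split => //; rewrite hsdotC cmodJ; lra.
have D_ge0 := dual_norm_ge0 normN; have DZ := dual_normZ_le normN.
have ND := hsdot_le_dual normN; have D_approx := dual_norm_approx normN.
split; split.
- exact: dual_pair_Mnorm_Lnorm D_ge0 NZ ND D_approx.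
- exact: dual_pair_Lnorm_Mnorm D_ge0 DN N_approx.
- exact: dual_pair_Lnorm_Mnorm N_ge0 ND D_approx.
- exact: dual_pair_Mnorm_Lnorm N_ge0 DZ DN N_approx.
Qed.
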